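(* Let $a_x,b_x$ be linearly independent linear forms. (B) For a quadratic form $f$: $J^2[f,a_xb_x,u_x^2]=0$ (identically in $u$) iff $f=a_0a_x^2+b_0b_x^2$ for some $a_0,b_0\in\mathbb C$. (C) For a cubic form $f$: $J^2[f,a_xb_x,u_x^2]=0$ (identically in $x$ and $u$) iff $f=a_0a_x^3+b_0b_x^3$ for some $a_0,b_0\in\mathbb C$.
   Context: Forms are homogeneous polynomials with complex coefficients in $x=(x_1,x_2,x_3)$. For $a\in\mathbb C^3$, $a_x=\sum a_ix_i$. The variables $u=(u_1,u_2,u_3)$ are indeterminates with $u_x=\sum u_ix_i$. The second transvectant is $J^2[f,g,h]=\big(\Omega^2(f(x)g(y)h(z))\big)|_{y=z=x}$, where $\Omega$ is the determinant of the operator matrix with rows $(\partial/\partial x_i)$, $(\partial/\partial y_i)$, $(\partial/\partial z_i)$, and $u$ is treated as constant. *)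

From HB Require Import structures.
From mathcomp Require Import all_boot all_order all_algebra all_fingroup.
From mathcomp Require Import reals complex.
From mathcomp Require Import mpoly.

Set Implicit Arguments.
Unset Strict Implicit.
Unset Printing Implicit Defensive.

Import GRing.Theory Num.Theory.
Local Open Scope ring_scope.

(* Polynomials in u = (u1,u2,u3): the "constant" coefficient ring. *)
Notation upoly C := {mpoly C[3]}.
(* Polynomials in x = (x1,x2,x3) with coefficients polynomials in u. *)
Notation xupoly C := {mpoly (upoly C)[3]}.

Section Transvectant.
Variable C : comNzRingType.

Definition linform (a : 'rV[C]_3) : {mpoly C[3]} :=
  \sum_(i < 3) a 0 i *: 'X_i.

Definition liftx (f : {mpoly C[3]}) : xupoly C := map_mpoly (fun c => c%:MP) f.

Definition ux : xupoly C := \sum_(i < 3) ('X_i : upoly C) *: 'X_i.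

(* The second transvectant: Omega^2 (f(x) g(y) h(z)) |_{y=z=x}, where
   Omega = det [d/dx ; d/dy ; d/dz] = sum_s sgn(s) d/dx_{s0} d/dy_{s1} d/dz_{s2},
   so Omega^2 = sum_{s,t} sgn(s) sgn(t) d_{x_{s0}} d_{x_{t0}} d_{y_{s1}} d_{y_{t1}}
   d_{z_{s2}} d_{z_{t2}}; u is treated as a constant. *)
Definition J2 (f g h : xupoly C) : xupoly C :=
  \sum_(s : 'S_3) \sum_(t : 'S_3)
    ((-1) ^+ (odd_perm s (+) odd_perm t)%B) *:
      (mderiv (s (inord 0)) (mderiv (t (inord 0)) f) *
       mderiv (s (inord 1)) (mderiv (t (inord 1)) g) *
       mderiv (s (inord 2)) (mderiv (t (inord 2)) h)).

End Transvectant.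

From HB Require Import structures.
From mathcomp Require Import all_boot all_order all_algebra all_fingroup.
From mathcomp Require Import reals complex.
From mathcomp Require Import mpoly.
From mathcomp Require Import ring.
Import GRing.Theory Num.Theory.

Set Implicit Arguments.
Unset Strict Implicit.
Unset Printing Implicit Defensive.

Local Open Scope ring_scope.

(* Substituting u := v turns J2[f, a_x b_x, u_x^2] into six times the mixed
   discriminant of the Hessians of f, a_x b_x and v_x^2.  For a quadratic f
   with (constant, symmetric) Hessian H this is 4 H(a x v, b x v), so
   H(a x v, b x v) = 0 for every v.  Written in the basis dual to (a, b, c),
   for any c with det(a, b, c) <> 0, this says that H is diagonal with last
   entry 0, i.e. H = s a a^T + t b b^T.  For a cubic f, every first partial
   derivative is then s_k a_x^2 + t_k b_x^2, and the symmetry of second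
   derivatives makes (s_k) and (t_k) proportional to a and b.  Conversely, the
   Hessian of a0 a_x^n + b0 b_x^n takes values in the span of a a^T and b b^T,
   whose mixed discriminant with a b^T + b a^T and any third matrix is 0. *)

Notation i0 := (@Ordinal 3 0 isT).
Notation i1 := (@Ordinal 3 1 isT).
Notation i2 := (@Ordinal 3 2 isT).

Lemma ord3P (k : 'I_3) : k = i0 \/ k = i1 \/ k = i2.
Proof.
case: k => [[|[|[|k]]] Hk] //; [left | right; left | right; right].
all: exact: val_inj.
Qed.

Definition perm3_enum : seq 'S_3 :=
  [:: 1; tperm i0 i1; tperm i0 i2; tperm i1 i2;
      tperm i0 i1 * tperm i1 i2; tperm i1 i2 * tperm i0 i1]%g.

Lemma sum_perm3 (V : nmodType) (F : 'S_3 -> V) :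
  \sum_(s : 'S_3) F s = \sum_(s <- perm3_enum) F s.
Proof.
have uniq_enum : uniq perm3_enum.
  apply: (@map_uniq _ _ (fun s : 'S_3 => (s i0, s i1, s i2))).
  by rewrite /= !permM !perm1 !permE.
have enumP (s : 'S_3) : s \in perm3_enum.
  have /subset_cardP enumT : #|perm3_enum| = #|{perm 'I_3}|.
    by rewrite (card_uniqP uniq_enum) card_Sn.
  by rewrite (enumT (subset_predT _)).
by rewrite -(eq_bigl _ _ enumP) -big_uniq.
Qed.

(* The permutations of 'I_3 as (parity, images of 0, 1 and 2); unlike 'S_3,
   these entries reduce by computation. *)
Definition perm3_table : seq (bool * ('I_3 * 'I_3 * 'I_3)) :=
  [:: (false, (i0, i1, i2)); (true, (i1, i0, i2)); (true, (i2, i1, i0));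
      (true, (i0, i2, i1)); (false, (i2, i0, i1)); (false, (i1, i2, i0))].

Section MixedDiscriminant.
Variable S : comNzRingType.
Implicit Types (P Q R h : 'I_3 -> 'I_3 -> S) (a b c v x y : 'I_3 -> S).

(* Six times the mixed discriminant of three 3x3 matrices. *)
Definition mixdisc P Q R : S :=
  \sum_(s : 'S_3) \sum_(t : 'S_3) (-1) ^+ (odd_perm s (+) odd_perm t)%B *
     (P (s i0) (t i0) * Q (s i1) (t i1) * R (s i2) (t i2)).

Lemma mixdisc_table P Q R : mixdisc P Q R =
  \sum_(x <- perm3_table) \sum_(y <- perm3_table) (-1) ^+ (x.1 (+) y.1)%B *
     (P x.2.1.1 y.2.1.1 * Q x.2.1.2 y.2.1.2 * R x.2.2 y.2.2).
Proof.
rewrite /mixdisc sum_perm3 !big_cons big_nil !sum_perm3 !big_cons !big_nil /=.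
rewrite !odd_permM !odd_tperm !odd_perm1 !permM !perm1 !permE /=.
ring.
Qed.

Lemma eq_mixdisc P Q R P' Q' R' :
  P =2 P' -> Q =2 Q' -> R =2 R' -> mixdisc P Q R = mixdisc P' Q' R'.
Proof.
move=> eP eQ eR; apply: eq_bigr => s _; apply: eq_bigr => t _.
by rewrite eP eQ eR.
Qed.

Definition sym_outer a b i j : S := a i * b j + a j * b i.

Definition cross a b (k : 'I_3) : S :=
  match nat_of_ord k with
  | 0 => a i1 * b i2 - a i2 * b i1
  | 1 => a i2 * b i0 - a i0 * b i2
  | _ => a i0 * b i1 - a i1 * b i0
  end.

Definition dot a b : S := a i0 * b i0 + a i1 * b i1 + a i2 * b i2.

Definition bilin h x y : S :=
  x i0 * (h i0 i0 * y i0 + h i0 i1 * y i1 + h i0 i2 * y i2) +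
  x i1 * (h i1 i0 * y i0 + h i1 i1 * y i1 + h i1 i2 * y i2) +
  x i2 * (h i2 i0 * y i0 + h i2 i1 * y i1 + h i2 i2 * y i2).

(* On span(a, b), in the basis (a, b), the pencil l P + m Q of the first two
   matrices is [[l p, m], [m, l q]], whose determinant has no l m-term. *)
Lemma mixdisc_span_outer (p q : S) a b R :
  mixdisc (fun i j => a i * a j * p + b i * b j * q) (sym_outer a b) R = 0.
Proof. by rewrite mixdisc_table !big_cons !big_nil /= /sym_outer; ring. Qed.

Lemma mixdisc_sym_outer h a b v :
  mixdisc h (sym_outer a b) (sym_outer v v) =
  2 * (bilin h (cross a v) (cross b v) + bilin h (cross b v) (cross a v)).
Proof.
by rewrite mixdisc_table !big_cons !big_nil /= /sym_outer /bilin /cross /=; ring.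
Qed.

Lemma dot_cross_cycle a b c : dot a (cross b c) = dot c (cross a b).
Proof. by rewrite /dot /cross /=; ring. Qed.

Lemma dot_delta l x : dot (fun i => (i == l)%:R) x = x l.
Proof. by rewrite /dot; case: (ord3P l) => [->|[->|->]]; rewrite /=; ring. Qed.

Section Symmetric.
Variable h : 'I_3 -> 'I_3 -> S.
Hypothesis h_sym : forall i j, h i j = h j i.

Lemma bilinC x y : bilin h x y = bilin h y x.
Proof. by rewrite /bilin (h_sym i1 i0) (h_sym i2 i0) (h_sym i2 i1); ring. Qed.

(* Expansion of h in the basis (b x c, c x a, a x b) dual to (a, b, c), where
   the off-diagonal coordinates and the last diagonal one are rewritten in
   terms of the values of v |-> h(a x v, b x v). *)
Lemma bilin_cross_expansion a b c i j :
  let W v := bilin h (cross a v) (cross b v) in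
  dot a (cross b c) ^+ 2 * h i j =
    bilin h (cross b c) (cross b c) * (a i * a j) +
    bilin h (cross c a) (cross c a) * (b i * b j)
    - W c * sym_outer a b i j
    + (W (fun k => b k + c k) - W c) * sym_outer a c i j
    + (W (fun k => a k + c k) - W c) * sym_outer b c i j
    - W (fun k => a k + b k) * (c i * c j).
Proof.
rewrite /= /bilin /sym_outer /dot /cross /=.
by case: (ord3P i) => [->|[->|->]]; case: (ord3P j) => [->|[->|->]];
  rewrite ?(h_sym i1 i0) ?(h_sym i2 i0) ?(h_sym i2 i1); ring.
Qed.

End Symmetric.
End MixedDiscriminant.

Section IndependentPair.
Variable C : numFieldType.
Implicit Types (a b c v : 'I_3 -> C).

Definition indep a b := forall x y : C,
  (forall i, x * a i + y * b i = 0) -> x = 0 /\ y = 0.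

Lemma free_indep (a b : 'rV[C]_3) :
  free [:: a; b] -> indep (fun i => a 0 i) (fun i => b 0 i).
Proof.
move=> /freeP ab_free x y xy0.
pose k (i : 'I_2) := if val i == 0%N then x else y.
have k0 : \sum_(i < 2) k i *: (in_tuple [:: a; b])`_i = 0.
  by rewrite !big_ord_recl big_ord0 /= addr0; apply/rowP => j; rewrite !mxE xy0.
exact: (conj (ab_free k k0 ord0) (ab_free k k0 ord_max)).
Qed.

Lemma indepC a b : indep a b -> indep b a.
Proof.
move=> hab x y hxy.
by have [] : y = 0 /\ x = 0 by apply: hab => i; rewrite addrC.
Qed.

Lemma indep_nonzero a b : indep a b -> exists l, a l != 0.
Proof.
move=> hab; apply/existsP; apply: contraT; rewrite negb_exists => /forallP a0.
have [/eqP] : (1 : C) = 0 /\ (0 : C) = 0.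
  by apply: hab => i; rewrite (eqP (negbNE (a0 i))) mulr0 mul0r addr0.
by rewrite oner_eq0.
Qed.

Lemma cross_eq0 a b : cross a b =1 (fun=> 0) -> forall i k, b k * a i = a k * b i.
Proof.
move=> ab0 i k; apply/eqP; rewrite -subr_eq0; apply/eqP.
have := ab0 i0; have := ab0 i1; have := ab0 i2; rewrite /cross /= => c2 c1 c0.
case: (ord3P i) => [->|[->|->]]; case: (ord3P k) => [->|[->|->]];
  first [ ring | rewrite -c0; ring | rewrite -oppr0 -c0; ring
        | rewrite -c1; ring | rewrite -oppr0 -c1; ring
        | rewrite -c2; ring | rewrite -oppr0 -c2; ring ].
Qed.

Lemma indep_cross a b : indep a b -> exists l, cross a b l != 0.
Proof.
move=> hab; have [k ak0] := indep_nonzero hab.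
apply/existsP; apply: contraT; rewrite negb_exists => /forallP ab0.
have /cross_eq0 ab_prop : cross a b =1 (fun=> 0).
  by move=> l; apply/eqP; rewrite -[_ == _]negbK ab0.
have [_ /eqP] : b k = 0 /\ - a k = 0.
  by apply: hab => i; rewrite mulNr ab_prop subrr.
by rewrite oppr_eq0 (negPf ak0).
Qed.

Lemma indep_det a b : indep a b -> exists c, dot a (cross b c) != 0.
Proof.
move=> /indep_cross [l abl]; exists (fun i => (i == l)%:R).
by rewrite dot_cross_cycle dot_delta.
Qed.

Lemma sym_outer_span a b (h : 'I_3 -> 'I_3 -> C) :
  indep a b -> (forall i j, h i j = h j i) ->
  (forall v, mixdisc h (sym_outer a b) (sym_outer v v) = 0) ->
  exists s t : C, forall i j, h i j = s * (a i * a j) + t * (b i * b j).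
Proof.
move=> hab h_sym h0.
have W0 v : bilin h (cross a v) (cross b v) = 0.
  apply: (@mulfI _ 4); first by rewrite pnatr_eq0.
  by rewrite mulr0 -(h0 v) mixdisc_sym_outer (bilinC h_sym (cross b v)); ring.
have [c D0] := indep_det hab.
set D := dot a (cross b c) in D0.
exists (bilin h (cross b c) (cross b c) / D ^+ 2).
exists (bilin h (cross c a) (cross c a) / D ^+ 2).
move=> i j; apply: (mulfI (expf_neq0 2 D0)).
by rewrite (bilin_cross_expansion h_sym a b c i j) /= !W0; field.
Qed.

End IndependentPair.

Definition hess n (A : comNzRingType) (p : {mpoly A[n]}) (i j : 'I_n) :=
  mderiv i (mderiv j p).

Section Homogeneous.
Variables (n : nat) (A : comNzRingType).
Implicit Types p q : {mpoly A[n]}.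

Lemma mderiv_dhomog d p i : p \is d.-homog -> mderiv i p \is d.-1.-homog.
Proof.
move=> hp; apply/dhomogP => m; rewrite mcoeff_msupp mcoeff_mderiv => nz.
have /(dhomog_mf hp) md : (m + U_(i))%MM \in msupp p.
  by rewrite mcoeff_msupp; apply: contraNneq nz => ->; rewrite mul0rn.
have <- : (mdeg m + 1 = d)%N by rewrite -(mdeg1 i) -mdegD; exact: md.
by rewrite addn1.
Qed.

Lemma dhomog0_mpolyC p : p \is 0.-homog -> p = (p@_0)%:MP.
Proof.
move=> hp; apply/mpolyP => m; rewrite mcoeffC.
case: eqP => [->|/eqP m0]; first by rewrite mulr1.
by rewrite mulr0 (dhomog_nemf_coeff hp) // mdeg_eq0.
Qed.

Lemma hess_dhomog2 p i j : p \is 2.-homog -> hess p i j = ((hess p i j)@_0)%:MP.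
Proof.
by move=> hp; apply/dhomog0_mpolyC/(mderiv_dhomog _ (mderiv_dhomog _ hp)).
Qed.

Lemma hessD p q i j : hess (p + q) i j = hess p i j + hess q i j.
Proof. by rewrite /hess !mderivD. Qed.

Lemma hessB p q i j : hess (p - q) i j = hess p i j - hess q i j.
Proof. by rewrite /hess !mderivB. Qed.

Lemma hessZ c p i j : hess (c *: p) i j = c *: hess p i j.
Proof. by rewrite /hess !mderivZ. Qed.

End Homogeneous.

Lemma dhomog_grad_eq0 n (A : numDomainType) d (p : {mpoly A[n]}) :
  p \is d.+1.-homog -> (forall i, mderiv i p = 0) -> p = 0.
Proof.
move=> hp p'0; apply/mpolyP => m; rewrite mcoeff0.
have [mdeg_m|] := eqVneq (mdeg m) d.+1; last exact: dhomog_nemf_coeff.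
have [i mi0] : exists i, (0 < m i)%N.
  apply/existsP; apply: contraT; rewrite negb_exists => /forallP m0.
  move: mdeg_m; rewrite mdegE big1 // => k _.
  by apply/eqP; rewrite -leqn0 leqNgt m0.
have mE : (m - U_(i) + U_(i))%MM = m.
  apply/mnmP => k; rewrite mnmDE mnmBE mnm1E.
  by case: (eqVneq i k) => [<-|_]; rewrite ?subn0 ?addn0 // subnK.
have /eqP := congr1 (mcoeff (m - U_(i))) (p'0 i).
by rewrite mcoeff_mderiv mcoeff0 mE mulrn_eq0 /=; move/eqP.
Qed.

Lemma dhomog_hess_eq0 n (A : numDomainType) d (p : {mpoly A[n]}) :
  p \is d.+2.-homog -> (forall i j, hess p i j = 0) -> p = 0.
Proof.
move=> hp p''0; apply: (dhomog_grad_eq0 hp) => j.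
exact: (dhomog_grad_eq0 (mderiv_dhomog j hp) (p''0^~ j)).
Qed.

Section LinearForms.
Variables (n : nat) (A : comNzRingType).
Implicit Types w z : 'I_n -> A.

Definition lin w : {mpoly A[n]} := \sum_(i < n) w i *: 'X_i.

Lemma mcoeff_lin w l : (lin w)@_U_(l) = w l.
Proof.
rewrite /lin raddf_sum /= (bigD1 l) //= mcoeffZ mcoeffXU eqxx mulr1.
by rewrite big1 ?addr0 // => i /negPf il; rewrite mcoeffZ mcoeffXU il mulr0.
Qed.

Lemma mderiv_lin w j : mderiv j (lin w) = (w j)%:MP.
Proof.
have dX i : mderiv j ('X_i : {mpoly A[n]}) = ((i == j)%:R)%:MP.
  rewrite mderivX mnm1E; case: eqP => [->|_]; last by rewrite scale0r rmorph0.
  have -> : (U_(j) - U_(j))%MM = 0%MM by apply/mnmP => k; rewrite mnmBE subnn mnmE.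
  by rewrite mpolyX0 scale1r rmorph1.
rewrite /lin raddf_sum (bigD1 j) //= big1 => [|i /negPf ij].
  by rewrite mderivZ dX eqxx rmorph1 addr0 alg_mpolyC.
by rewrite mderivZ dX ij rmorph0 scaler0.
Qed.

Lemma dhomog_linX w k : lin w ^+ k \is k.-homog.
Proof.
have lin1 : lin w \is 1.-homog.
  by apply: rpred_sum => i _; rewrite dhomogZ // dhomogX /= mdeg1.
by have := dhomogMn k lin1; rewrite mul1n.
Qed.

Lemma mderiv_linX w k j :
  mderiv j (lin w ^+ k.+1) = (w j)%:MP * lin w ^+ k *+ k.+1.
Proof.
elim: k => [|k IHk]; first by rewrite expr1 expr0 mulr1 mderiv_lin.
by rewrite exprS mderivM IHk mderiv_lin exprS; ring.
Qed.

Lemma hess_linM w z i j :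
  hess (lin w * lin z) i j = (w i * z j + w j * z i)%:MP.
Proof.
rewrite /hess mderivM !mderiv_lin mderivD !mderivM !mderiv_lin !mderivC.
by rewrite mul0r mulr0 add0r addr0 rmorphD !rmorphM addrC.
Qed.

Lemma hess_linX w k i j :
  hess (lin w ^+ k.+2) i j = (w i * w j)%:MP * lin w ^+ k *+ (k.+2 * k.+1).
Proof.
rewrite /hess mderiv_linX mderivMn mderiv_mulC mderiv_linX.
by rewrite mulrnAr -mulrnA mulnC mulrA -rmorphM (mulrC (w j)).
Qed.

Lemma hess_powers (c d : A) w z k i j :
  hess (c *: lin w ^+ k.+2 + d *: lin z ^+ k.+2) i j =
  (w i * w j)%:MP * (c *: (lin w ^+ k *+ (k.+2 * k.+1))) +
  (z i * z j)%:MP * (d *: (lin z ^+ k *+ (k.+2 * k.+1))).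
Proof. by rewrite hessD (hessZ c) (hessZ d) !hess_linX -!mulrnAr !scalerAr. Qed.

End LinearForms.

Lemma mderiv_map_mpoly n (A B : comNzRingType) (f : {rmorphism A -> B}) i
    (p : {mpoly A[n]}) :
  mderiv i (map_mpoly f p) = map_mpoly f (mderiv i p).
Proof.
apply/mpolyP => m.
by rewrite mcoeff_map_mpoly !mcoeff_mderiv mcoeff_map_mpoly raddfMn.
Qed.

Lemma rmorph_mixdisc (A B : comNzRingType) (f : {rmorphism A -> B}) P Q R :
  f (mixdisc P Q R) =
  mixdisc (fun i j => f (P i j)) (fun i j => f (Q i j)) (fun i j => f (R i j)).
Proof.
rewrite rmorph_sum; apply: eq_bigr => s _; rewrite rmorph_sum.
by apply: eq_bigr => t _; rewrite !rmorphM rmorphXn rmorphN1.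
Qed.

Lemma mderiv_mixdisc n (A : comNzRingType) k
    (P Q R : 'I_3 -> 'I_3 -> {mpoly A[n]}) :
  (forall i j, mderiv k (Q i j) = 0) -> (forall i j, mderiv k (R i j) = 0) ->
  mderiv k (mixdisc P Q R) = mixdisc (fun i j => mderiv k (P i j)) Q R.
Proof.
move=> Q'0 R'0; rewrite raddf_sum; apply: eq_bigr => s _ /=.
rewrite raddf_sum; apply: eq_bigr => t _ /=.
rewrite !mulr_sign; case: (_ (+) _);
  by rewrite ?mderivN !mderivM !Q'0 !R'0 !mulr0 !addr0.
Qed.

Section Transvectant.
Variable A : comNzRingType.
Implicit Types (f g p q : {mpoly A[3]}) (v : 'I_3 -> A).

Lemma J2E (f g h : xupoly A) : J2 f g h = mixdisc (hess f) (hess g) (hess h).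
Proof.
have inordE k (lt_k3 : (k < 3)%N) : inord k = Ordinal lt_k3.
  by apply: val_inj; rewrite /= inordK.
rewrite /J2 (inordE 0 isT) (inordE 1 isT) (inordE 2 isT).
apply: eq_bigr => s _; apply: eq_bigr => t _.
by rewrite -mul_mpolyC rmorphXn rmorphN1.
Qed.

Lemma liftxE f : liftx f = map_mpoly (mpolyC 3 (R:=A)) f.
Proof. by []. Qed.

Lemma hess_liftx f i j : hess (liftx f) i j = liftx (hess f i j).
Proof. by rewrite /hess !liftxE !mderiv_map_mpoly. Qed.

Lemma meval_liftx v f : map_mpoly (meval v) (liftx f) = f.
Proof. by apply/mpolyP => m; rewrite liftxE !mcoeff_map_mpoly; exact: mevalC. Qed.

Lemma meval_ux v : map_mpoly (meval v) (ux A) = lin v.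
Proof.
rewrite /ux /lin raddf_sum; apply: eq_bigr => i _ /=.
by rewrite map_mpolyZ map_mpolyX; congr (_ *: _); exact: mevalXU.
Qed.

Lemma J2_meval f g v : J2 (liftx f) (liftx g) (ux A ^+ 2) = 0 ->
  mixdisc (hess f) (hess g) (hess (lin v ^+ 2)) = 0.
Proof.
move=> /(congr1 (map_mpoly (meval v))); rewrite rmorph0 J2E rmorph_mixdisc => <-.
apply: eq_mixdisc => i j /=;
  rewrite /hess -!(@mderiv_map_mpoly _ _ _ (meval v)) ?meval_liftx //.
rewrite rmorphXn; congr (mderiv _ (mderiv _ (_ ^+ 2))).
by symmetry; exact: meval_ux.
Qed.

Lemma liftxD p q : liftx (p + q) = liftx p + liftx q.
Proof. by rewrite !liftxE rmorphD. Qed.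

Lemma liftxM p q : liftx (p * q) = liftx p * liftx q.
Proof. by rewrite !liftxE rmorphM. Qed.

Lemma liftxC (c : A) : liftx c%:MP = (c%:MP)%:MP.
Proof. by rewrite liftxE map_mpolyC. Qed.

Lemma J2_span_eq0 (f X Y : {mpoly A[3]}) (a b : 'I_3 -> A) h :
  (forall i j, hess f i j = (a i * a j)%:MP * X + (b i * b j)%:MP * Y) ->
  J2 (liftx f) (liftx (lin a * lin b)) h = 0.
Proof.
move=> f''E; pose const (c : A) : xupoly A := (c%:MP)%:MP.
rewrite J2E (@eq_mixdisc _ _ _ _
  (fun i j => const (a i) * const (a j) * liftx X +
              const (b i) * const (b j) * liftx Y)
  (sym_outer (fun i => const (a i)) (fun i => const (b i))) (hess h))
  ?mixdisc_span_outer // => i j; rewrite hess_liftx.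
- by rewrite f''E liftxD !liftxM !liftxC !rmorphM.
- by rewrite hess_linM liftxC /sym_outer !rmorphD !rmorphM.
Qed.

Lemma J2_powers_eq0 (a b : 'I_3 -> A) (a0 b0 : A) k h :
  J2 (liftx (a0 *: lin a ^+ k.+2 + b0 *: lin b ^+ k.+2))
     (liftx (lin a * lin b)) h = 0.
Proof. by apply: J2_span_eq0 => i j; rewrite hess_powers. Qed.

End Transvectant.

Section Classification.
Variable C : numFieldType.
Variables a b : 'I_3 -> C.
Hypothesis hab : indep a b.

(* J2[f, a_x b_x, u_x^2] = 0 read after every substitution u := v; see J2_meval. *)
Definition J2_null (f : {mpoly C[3]}) :=
  forall v, mixdisc (hess f) (hess (lin a * lin b)) (hess (lin v ^+ 2)) = 0.

Lemma J2_null_mderiv f k : J2_null f -> J2_null (mderiv k f).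
Proof.
move=> f0 v; have := congr1 (mderiv k) (f0 v); rewrite mderiv0 mderiv_mixdisc.
- move=> <-; apply: eq_mixdisc => // i j.
  by rewrite /hess (mderiv_comm k j) (mderiv_comm k i).
- by move=> i j; rewrite hess_linM mderivC.
- by move=> i j; rewrite expr2 hess_linM mderivC.
Qed.

Lemma J2_null_dhomog2 f : f \is 2.-homog -> J2_null f ->
  exists a0 b0 : C, f = a0 *: lin a ^+ 2 + b0 *: lin b ^+ 2.
Proof.
move=> f2 f0; pose h i j := (hess f i j)@_0.
have hE i j : hess f i j = (h i j)%:MP by exact: hess_dhomog2.
have h_sym i j : h i j = h j i by rewrite /h /hess mderiv_comm.
have [s [t hst]] : exists s t : C,
    forall i j, h i j = s * (a i * a j) + t * (b i * b j).
  apply: sym_outer_span hab h_sym _ => v; apply/eqP; rewrite -(mpolyC_eq0 3).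
  rewrite rmorph_mixdisc -(f0 v); apply/eqP; apply: eq_mixdisc => i j.
  - by rewrite hE.
  - by rewrite hess_linM.
  - by rewrite expr2 hess_linM.
exists (s / 2), (t / 2); apply/eqP; rewrite -subr_eq0; apply/eqP.
apply: (@dhomog_hess_eq0 _ _ 0) => [|i j].
  by rewrite rpredB // rpredD // dhomogZ // dhomog_linX.
rewrite hessB hE hessD (hessZ (s / 2)) (hessZ (t / 2)) !hess_linX !expr0 !mulr1.
rewrite -!mul_mpolyC -!rmorphMn -!rmorphM -rmorphD -rmorphB.
by apply/eqP; rewrite mpolyC_eq0 hst; apply/eqP; field.
Qed.

Lemma dhomog2_grad_coef_sym (al be : 'I_3 -> C) (f : {mpoly C[3]}) :
  (forall k, mderiv k f = al k *: lin a ^+ 2 + be k *: lin b ^+ 2) ->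
  forall j k, al j * a k = al k * a j /\ be j * b k = be k * b j.
Proof.
move=> f'E j k; have E := mderiv_comm j k f.
rewrite !f'E !mderivD !mderivZ !mderiv_linX !expr1 in E.
have [] : 2 * (al j * a k - al k * a j) = 0 /\ 2 * (be j * b k - be k * b j) = 0.
  apply: hab => l; have := congr1 (mcoeff U_(l)) E.
  rewrite !mcoeffD !mcoeffZ !mcoeffMn !mcoeffCM !mcoeff_lin.
  by move/eqP; rewrite -subr_eq0 => /eqP <-; ring.
have two0 : (2 : C) != 0 by rewrite pnatr_eq0.
by move=> /eqP + /eqP; rewrite !mulf_eq0 (negPf two0) /= !subr_eq0 => /eqP ? /eqP.
Qed.

Lemma J2_null_dhomog3 f : f \is 3.-homog -> J2_null f ->
  exists a0 b0 : C, f = a0 *: lin a ^+ 3 + b0 *: lin b ^+ 3.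
Proof.
move=> f3 f0.
have grad k : exists st : C * C,
    mderiv k f = st.1 *: lin a ^+ 2 + st.2 *: lin b ^+ 2.
  have [s [t ->]] := J2_null_dhomog2 (mderiv_dhomog k f3) (J2_null_mderiv k f0).
  by exists (s, t).
have [st f'E] := fin_all_exists grad.
have coef_sym := dhomog2_grad_coef_sym f'E.
have [[l1 al1] [l2 bl2]] := (indep_nonzero hab, indep_nonzero (indepC hab)).
exists ((st l1).1 / a l1 / 3), ((st l2).2 / b l2 / 3).
apply/eqP; rewrite -subr_eq0; apply/eqP.
apply: (@dhomog_grad_eq0 _ _ 2) => [|k].
  by rewrite rpredB // rpredD // dhomogZ // dhomog_linX.
rewrite mderivB mderivD !mderivZ !mderiv_linX f'E.
rewrite -!mul_mpolyC -!mulrnAl -!rmorphMn !mulrA -!rmorphM.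
have [alE _] := coef_sym l1 k; have [_ beE] := coef_sym l2 k.
have -> : (st l1).1 / a l1 / 3 * (a k *+ 3) = (st k).1.
  by rewrite -[RHS](mulfK al1) -alE; field.
have -> : (st l2).2 / b l2 / 3 * (b k *+ 3) = (st k).2.
  by rewrite -[RHS](mulfK bl2) -beE; field.
by rewrite subrr.
Qed.

End Classification.

Theorem lemma5p3 (R : realType) (a b : 'rV[R[i]]_3) :
  free [:: a; b] ->
  (* (B) quadratic forms *)
  (forall f : {mpoly R[i][3]}, f \is 2.-homog ->
     (J2 (liftx f) (liftx (linform a * linform b)) (ux R[i] ^+ 2) = 0 <->
      exists a0 b0 : R[i],
        f = a0 *: linform a ^+ 2 + b0 *: linform b ^+ 2)) /\
  (* (C) cubic forms *)
  (forall f : {mpoly R[i][3]}, f \is 3.-homog ->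
     (J2 (liftx f) (liftx (linform a * linform b)) (ux R[i] ^+ 2) = 0 <->
      exists a0 b0 : R[i],
        f = a0 *: linform a ^+ 3 + b0 *: linform b ^+ 3)).
Proof.
move=> /free_indep hab; split=> f hf; split.
- by move=> f0; apply: (J2_null_dhomog2 hab hf) => v; apply: J2_meval f0.
- by case=> [a0 [b0 ->]]; apply: (@J2_powers_eq0 _ _ _ _ _ 0).
- by move=> f0; apply: (J2_null_dhomog3 hab hf) => v; apply: J2_meval f0.
- by case=> [a0 [b0 ->]]; apply: (@J2_powers_eq0 _ _ _ _ _ 1).
Qed.
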